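(* Let $0\to C\to B\to A\to 0$ be a short exact sequence of abelian groups, with the groups and the maps definable in some structure. Assume that $C$ is finite, and that, for $n$ the exponent of $C$, the group $A/nA$ is finite and the $n$-torsion subgroup $A[n]$ of $A$ is finite. Then there is a definable group homomorphism $A\to B$ with finite kernel and with image of finite index in $B$. *)

From mathcomp Require Import all_boot classical_sets cardinality.
Set Implicit Arguments. Unset Strict Implicit. Unset Printing Implicit Defensive.
Local Open Scope classical_set_scope.

(* A structure in the sense of van den Dries ("Tame topology", Ch. 1):
   for each n, a Boolean algebra of subsets of M^n (tuples 'I_n -> M),
   closed under products with M on both sides, containing the diagonals
   {x_1 = x_n}, and closed under projection forgetting the last coordinate.
   These are exactly the collections of definable (with parameters) sets of
   first-order structures on M. *)
Unset Implicit Arguments.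
Record dstructure (M : Type) := DStructure {
  dsets :> forall n : nat, set (set ('I_n -> M));
  ds_setT : forall n, dsets n setT;
  ds_setC : forall n (A : set ('I_n -> M)), dsets n A -> dsets n (~` A);
  ds_setU : forall n (A B : set ('I_n -> M)),
      dsets n A -> dsets n B -> dsets n (A `|` B);
  ds_prodr : forall n (A : set ('I_n -> M)), dsets n A ->
      dsets n.+1 [set x | A (fun i => x (widen_ord (leqnSn n) i))];
  ds_prodl : forall n (A : set ('I_n -> M)), dsets n A ->
      dsets n.+1 [set x | A (fun i => x (lift ord0 i))];
  ds_diag : forall n, dsets n.+1 [set x | x ord0 = x ord_max];
  ds_proj : forall n (A : set ('I_n.+1 -> M)), dsets n.+1 A ->
      dsets n [set x | exists y, A y /\ x = (fun i => y (widen_ord (leqnSn n) i))]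
}.
Set Implicit Arguments.
Arguments dsets {M} d n.

Definition tcat (M : Type) (k l : nat) (x : 'I_k -> M) (y : 'I_l -> M)
  : 'I_(k + l) -> M :=
  fun i => match split i with inl j => x j | inr j => y j end.

Definition fgraph_on (M : Type) (k l : nat) (D : set ('I_k -> M))
  (f : ('I_k -> M) -> ('I_l -> M)) : set ('I_(k + l) -> M) :=
  [set z | exists x, D x /\ z = tcat x (f x)].

Definition opgraph_on (M : Type) (k : nat) (D : set ('I_k -> M))
  (op : ('I_k -> M) -> ('I_k -> M) -> ('I_k -> M)) : set ('I_(k + (k + k)) -> M) :=
  [set z | exists x y, D x /\ D y /\ z = tcat x (tcat y (op x y))].

Record dagroup (M : Type) (S : dstructure M) := DAGroup {
  dg_dim : nat;
  dg_set :> set ('I_dg_dim -> M);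
  dg_add : ('I_dg_dim -> M) -> ('I_dg_dim -> M) -> ('I_dg_dim -> M);
  dg_zero : 'I_dg_dim -> M;
  dg_zeroP : dg_set dg_zero;
  dg_addP : forall x y, dg_set x -> dg_set y -> dg_set (dg_add x y);
  dg_addA : forall x y z, dg_set x -> dg_set y -> dg_set z ->
      dg_add x (dg_add y z) = dg_add (dg_add x y) z;
  dg_addC : forall x y, dg_set x -> dg_set y -> dg_add x y = dg_add y x;
  dg_add0 : forall x, dg_set x -> dg_add dg_zero x = x;
  dg_addN : forall x, dg_set x -> exists2 y, dg_set y & dg_add y x = dg_zero;
  dg_def_set : S dg_dim dg_set;
  dg_def_add : S (dg_dim + (dg_dim + dg_dim)) (opgraph_on dg_set dg_add)
}.
Arguments dg_zero {M S} d.
Arguments dg_dim {M S} d.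
Arguments dg_set {M S} d _.
Arguments dg_add {M S d} _ _.

Section Groups.
Variables (M : Type) (S : dstructure M).

Definition elt (G : dagroup S) := 'I_(dg_dim G) -> M.

Definition gmul (G : dagroup S) (n : nat) (x : elt G) : elt G :=
  iter n (dg_add x) (dg_zero G).

Definition dhom (G H : dagroup S) (f : elt G -> elt H) : Prop :=
  [/\ (forall x, dg_set G x -> dg_set H (f x)),
      (forall x y, dg_set G x -> dg_set G y -> f (dg_add x y) = dg_add (f x) (f y)) &
      S (dg_dim G + dg_dim H) (fgraph_on (dg_set G) f)].

Definition is_exponent (G : dagroup S) (n : nat) : Prop :=
  [/\ (0 < n)%N, (forall x, dg_set G x -> gmul n x = dg_zero G) &
      (forall m, (0 < m)%N -> (forall x, dg_set G x -> gmul m x = dg_zero G) -> (n <= m)%N)].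

Definition finite_index (G : dagroup S) (H : set (elt G)) : Prop :=
  finite_set [set [set y | exists2 h, H h & y = dg_add x h] | x in dg_set G].

Definition mulgroup (G : dagroup S) (n : nat) : set (elt G) :=
  [set gmul n x | x in dg_set G].

Definition torsion (G : dagroup S) (n : nat) : set (elt G) :=
  [set x | dg_set G x /\ gmul n x = dg_zero G].

Definition short_exact (C B A : dagroup S) (i : elt C -> elt B) (p : elt B -> elt A)
  : Prop :=
  [/\ dhom i, dhom p,
      (forall x y, dg_set C x -> dg_set C y -> i x = i y -> x = y),
      (forall a, dg_set A a -> exists2 b, dg_set B b & p b = a) &
      (forall b, dg_set B b -> (p b = dg_zero A <-> exists2 c, dg_set C c & i c = b))].

End Groups.
Arguments mulgroup {M S} G n _.
Arguments torsion {M S} G n _.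
Arguments is_exponent {M S} G n.

From mathcomp Require Import all_boot boolp classical_sets cardinality.
Local Open Scope classical_set_scope.
Set Implicit Arguments. Unset Strict Implicit.

(* Since n kills C, the element n * b of B depends only on p b: two lifts of
   a in A differ by an element of C.  Hence a |-> n * lift a is a well-defined
   homomorphism f : A -> B, definable because its graph is the projection of
   the definable set {(p b, n * b, b)}.  As p (f a) = n * a, its kernel lies in
   the finite group A[n], and its image is nB.  Finally B/nB is finite: the
   coset b + nB only depends on the coset of p b in A/nA and on an element of C,
   since b = lift a0 + n * lift a + i c whenever p b = a0 + n * a. *)

Section Definable.
Variables (M : Type) (S : dstructure M).
Arguments ds_setT {M} d n.
Arguments ds_setC {M} d {n A}.
Arguments ds_setU {M} d {n A B}.
Arguments ds_prodr {M} d {n A}.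
Arguments ds_prodl {M} d {n A}.
Arguments ds_diag {M} d n.
Arguments ds_proj {M} d {n A}.

Lemma ds_ext N (X Y : set ('I_N -> M)) : S N X -> (forall x, X x <-> Y x) -> S N Y.
Proof. by move=> hX e; have -> : Y = X by apply/funext=> x; apply/propext; split=> /e. Qed.

Lemma ds_setI N (X Y : set ('I_N -> M)) : S N X -> S N Y -> S N (X `&` Y).
Proof.
move=> hX hY; apply: ds_ext (ds_setC S (ds_setU S (ds_setC S hX) (ds_setC S hY))) _ => x /=.
split; first by move=> /not_orP[/contrapT ? /contrapT ?].
by move=> [? ?] [].
Qed.

Lemma ds_forall N (I : finType) (F : I -> set ('I_N -> M)) :
  (forall j, S N (F j)) -> S N [set x | forall j, F j x].
Proof.
move=> hF; suff /(_ (enum I)) : forall s : seq I, S N [set x | forall j, j \in s -> F j x].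
  by move/ds_ext; apply=> x; split=> h j => [|_]; apply: h; rewrite ?mem_enum.
elim=> [|j s IH]; first by apply: ds_ext (ds_setT S N) _ => x; split.
apply: ds_ext (ds_setI (hF j) IH) _ => x /=; split.
  by move=> [h1 h2] k; rewrite inE => /orP[/eqP->|/h2].
by move=> h; split=> [|k ks]; apply: h; rewrite inE ?eqxx ?ks ?orbT.
Qed.

Lemma ds_widen N n (h : (n <= N)%N) (A : set ('I_n -> M)) : S n A ->
  S N [set x : 'I_N -> M | A (x \o widen_ord h)].
Proof.
have widen_id (x : 'I_n -> M) (e : (n <= n)%N) : x \o widen_ord e = x.
  by apply/funext=> i; congr x; apply: val_inj.
move=> hA; elim: N h => [|N IH] h.
  have e : n = 0%N by apply/eqP; rewrite -leqn0.
  by subst n; apply: ds_ext hA _ => x /=; rewrite widen_id.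
have [e|lt] := eqVneq n N.+1; first by subst n; apply: ds_ext hA _ => x /=; rewrite widen_id.
have h' : (n <= N)%N by rewrite -ltnS ltn_neqAle lt h.
apply: ds_ext (ds_prodr S (IH h')) _ => x /=.
suff -> : x \o widen_ord (leqnSn N) \o widen_ord h' = x \o widen_ord h by [].
by apply/funext=> i; congr x; apply: val_inj.
Qed.

Lemma ds_shift k n (A : set ('I_n -> M)) : S n A ->
  S (k + n) [set x : 'I_(k + n) -> M | A (x \o @rshift k n)].
Proof.
move=> hA; elim: k => [|k IH].
  apply: ds_ext hA _ => x /=; suff -> : x \o @rshift 0 n = x by [].
  by apply/funext=> i; congr x; apply: val_inj.
apply: ds_ext (ds_prodl S IH) _ => x /=.
suff -> : x \o lift ord0 \o @rshift k n = x \o @rshift k.+1 n by [].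
by apply/funext=> i; congr x; apply: val_inj.
Qed.

Lemma ds_eq_coord N (a b : 'I_N) : S N [set x | x a = x b].
Proof.
wlog ab : a b / (a <= b)%N.
  move=> W; have [/W//|/ltnW ba] := leqP a b.
  by apply: ds_ext (W _ _ ba) _ => x /=; split=> ->.
pose d := (b - a)%N.
have h : (a + d.+1 <= N)%N by rewrite /d addnS subnKC // ltn_ord.
apply: ds_ext (ds_widen h (ds_shift a (ds_diag S d))) _ => x /=.
have -> : widen_ord h (rshift a ord0) = a by apply: val_inj; rewrite /= addn0.
by have -> : widen_ord h (rshift a ord_max) = b by apply: val_inj; rewrite /= /d subnKC.
Qed.

Definition prefix m N (x : 'I_m -> M) (y : 'I_N -> M) :=
  forall (i : 'I_m) (j : 'I_N), val i = val j -> x i = y j.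

Lemma ds_proj_prefix N m (P : set ('I_N -> M)) : (m <= N)%N -> S N P ->
  S m [set x | exists y, P y /\ prefix x y].
Proof.
have prefix_id (x y : 'I_m -> M) : prefix x y -> x = y.
  by move=> pre; apply/funext=> i; apply: pre.
have proj_id (P' : set ('I_m -> M)) : S m P' -> S m [set x | exists y, P' y /\ prefix x y].
  move/ds_ext; apply=> x; split=> [Px|[y [Py /prefix_id -> //]]].
  by exists x; split=> // i j /val_inj->.
elim: N P => [|N IH] P h hP.
  have e : m = 0%N by apply/eqP; rewrite -leqn0.
  by subst m; exact: proj_id.
have [e|lt] := eqVneq m N.+1; first by subst m; exact: proj_id.
have h' : (m <= N)%N by rewrite -ltnS ltn_neqAle lt h.
apply: ds_ext (IH _ h' (ds_proj S hP)) _ => x /=; split.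
  move=> [y' [[y [Py ->]] pre]]; exists y; split=> // i j ij.
  have jN : (j < N)%N by rewrite -ij (leq_trans (ltn_ord i)).
  by rewrite (pre i (Ordinal jN)) //; congr y; apply: val_inj.
move=> [y [Py pre]]; exists (fun i => y (widen_ord (leqnSn N) i)); split; first by exists y.
by move=> i j ij; apply: pre.
Qed.

Lemma tcatL k l (x : 'I_k -> M) (y : 'I_l -> M) j : tcat x y (lshift l j) = x j.
Proof. by rewrite /tcat (unsplitK (inl j)). Qed.

Lemma tcatR k l (x : 'I_k -> M) (y : 'I_l -> M) j : tcat x y (rshift k j) = y j.
Proof. by rewrite /tcat (unsplitK (inr j)). Qed.

Lemma tcat_lshift k l (x : 'I_k -> M) (y : 'I_l -> M) : tcat x y \o lshift l = x.
Proof. by apply/funext=> j; rewrite /= tcatL. Qed.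

Lemma tcat_rshift k l (x : 'I_k -> M) (y : 'I_l -> M) : tcat x y \o @rshift k l = y.
Proof. by apply/funext=> j; rewrite /= tcatR. Qed.

Lemma tcat_split k l (z : 'I_(k + l) -> M) : tcat (z \o lshift l) (z \o @rshift k l) = z.
Proof. by apply/funext=> i; rewrite /tcat; case: splitP => j e; congr z; exact: val_inj. Qed.

Lemma tcat_surj k l (z : 'I_(k + l) -> M) : exists x y, z = tcat x y.
Proof. by exists (z \o lshift l), (z \o @rshift k l); rewrite tcat_split. Qed.

Lemma tcat_inj k l (x x' : 'I_k -> M) (y y' : 'I_l -> M) :
  tcat x y = tcat x' y' -> x = x' /\ y = y'.
Proof.
move=> e; split; first by rewrite -(tcat_lshift x y) e tcat_lshift.
by rewrite -(tcat_rshift x y) e tcat_rshift.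
Qed.

Lemma ds_proj_tcat m n (P : set ('I_(m + n) -> M)) : S (m + n) P ->
  S m [set x | exists y, P (tcat x y)].
Proof.
move=> hP; apply: ds_ext (ds_proj_prefix (leq_addr n m) hP) _ => x; split.
  move=> [y [Py pre]]; exists (y \o @rshift m n).
  suff -> : tcat x (y \o @rshift m n) = y by [].
  by rewrite -[RHS]tcat_split; congr tcat; apply/funext=> j; exact: pre.
move=> [y Py]; exists (tcat x y); split=> // i j ij.
have -> : j = lshift n i by apply: val_inj.
by rewrite tcatL.
Qed.

Lemma ds_pullback n m (A : set ('I_n -> M)) (s : 'I_n -> 'I_m) : S n A ->
  S m [set x : 'I_m -> M | A (x \o s)].
Proof.
move=> hA.
pose P := [set z : 'I_(m + n) -> M | A (z \o @rshift m n)] `&`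
          [set z | forall j, z (rshift m j) = z (lshift n (s j))].
have hP : S (m + n) P.
  by apply: ds_setI; [exact: ds_shift | apply: ds_forall => j; exact: ds_eq_coord].
apply: ds_ext (ds_proj_tcat hP) _ => x /=; split.
  move=> [y [Ay E]]; suff <- : tcat x y \o @rshift m n = x \o s by [].
  by apply/funext=> j; rewrite /= E tcatL.
move=> Ax; exists (x \o s); split; first by rewrite /= tcat_rshift.
by move=> j; rewrite tcatL tcatR.
Qed.

Definition tcatf k l N (s1 : 'I_k -> 'I_N) (s2 : 'I_l -> 'I_N) : 'I_(k + l) -> 'I_N :=
  fun i => match split i with inl j => s1 j | inr j => s2 j end.

Lemma comp_tcatf k l N (s1 : 'I_k -> 'I_N) (s2 : 'I_l -> 'I_N) (w : 'I_N -> M) :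
  w \o tcatf s1 s2 = tcat (w \o s1) (w \o s2).
Proof. by apply/funext=> i; rewrite /= /tcatf /tcat; case: (split i). Qed.

Lemma ds_pullback2 N k l (X : set ('I_(k + l) -> M)) (s1 : 'I_k -> 'I_N) (s2 : 'I_l -> 'I_N) :
  S (k + l) X -> S N [set w : 'I_N -> M | X (tcat (w \o s1) (w \o s2))].
Proof.
by move=> hX; apply: ds_ext (ds_pullback (tcatf s1 s2) hX) _ => w /=; rewrite comp_tcatf.
Qed.

Lemma ds_pullback3 N k l m (X : set ('I_(k + (l + m)) -> M)) (s1 : 'I_k -> 'I_N)
  (s2 : 'I_l -> 'I_N) (s3 : 'I_m -> 'I_N) :
  S (k + (l + m)) X ->
  S N [set w : 'I_N -> M | X (tcat (w \o s1) (tcat (w \o s2) (w \o s3)))].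
Proof.
by move=> hX; apply: ds_ext (ds_pullback2 s1 (tcatf s2 s3) hX) _ => w /=; rewrite comp_tcatf.
Qed.

Lemma tcat3_ll k l m (x : 'I_k -> M) (y : 'I_l -> M) (u : 'I_m -> M) :
  tcat (tcat x y) u \o (lshift m \o lshift l) = x.
Proof. by apply/funext=> j; rewrite /= !tcatL. Qed.

Lemma tcat3_lr k l m (x : 'I_k -> M) (y : 'I_l -> M) (u : 'I_m -> M) :
  tcat (tcat x y) u \o (lshift m \o @rshift k l) = y.
Proof. by apply/funext=> j; rewrite /= tcatL tcatR. Qed.

Lemma fgraphP k l (D : set ('I_k -> M)) (f : ('I_k -> M) -> ('I_l -> M)) x y :
  fgraph_on D f (tcat x y) <-> D x /\ y = f x.
Proof.
split; last by move=> [Dx ->]; exists x.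
by move=> [x' [Dx' /tcat_inj [-> ->]]].
Qed.

Lemma opgraphP k (D : set ('I_k -> M)) op x y z :
  opgraph_on D op (tcat x (tcat y z)) <-> [/\ D x, D y & z = op x y].
Proof.
split; last by move=> [Dx Dy ->]; exists x, y.
by move=> [x' [y' [Dx' [Dy' /tcat_inj [-> /tcat_inj [-> ->]]]]]].
Qed.

Lemma ds_fgraph_id k (D : set ('I_k -> M)) : S k D -> S (k + k) (fgraph_on D id).
Proof.
move=> hD.
pose X := [set w : 'I_(k + k) -> M | D (w \o lshift k)] `&`
          [set w | forall j, w (lshift k j) = w (rshift k j)].
have hX : S (k + k) X.
  by apply: ds_setI; [exact: ds_pullback | apply: ds_forall => j; exact: ds_eq_coord].
apply: ds_ext hX _ => z; have [x [y ->]] := tcat_surj z.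
rewrite fgraphP /X /= tcat_lshift; split=> -[Dx E]; split=> //.
  by apply/funext=> j; move: (E j); rewrite tcatL tcatR.
by move=> j; rewrite E tcatL tcatR.
Qed.

Lemma ds_fgraph_op k (D : set ('I_k -> M)) (g : ('I_k -> M) -> ('I_k -> M)) op :
  (forall x, D x -> D (g x)) -> S (k + k) (fgraph_on D g) ->
  S (k + (k + k)) (opgraph_on D op) -> S (k + k) (fgraph_on D (fun x => op x (g x))).
Proof.
move=> gD hg hop.
pose X := [set w : 'I_(k + k + k) -> M |
             fgraph_on D g (tcat (w \o (lshift k \o lshift k)) (w \o @rshift (k + k) k))] `&`
          [set w : 'I_(k + k + k) -> M | opgraph_on D op (tcat (w \o (lshift k \o lshift k))
             (tcat (w \o @rshift (k + k) k) (w \o (lshift k \o @rshift k k))))].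
have hX : S (k + k + k) X by apply: ds_setI; [exact: ds_pullback2 | exact: ds_pullback3].
apply: ds_ext (ds_proj_tcat hX) _ => z; have [x [y ->]] := tcat_surj z.
rewrite fgraphP /X /=; split.
  by move=> [u []]; rewrite tcat3_ll tcat_rshift tcat3_lr fgraphP opgraphP => -[Dx ->] [].
move=> [Dx ->]; exists (g x); rewrite tcat3_ll tcat_rshift tcat3_lr fgraphP opgraphP.
by split=> //; split=> //; exact: gD.
Qed.

Lemma ds_fgraph_factor kA kB kC (DA : set ('I_kA -> M)) (DB : set ('I_kB -> M))
  (p : ('I_kB -> M) -> ('I_kA -> M)) (h : ('I_kB -> M) -> ('I_kC -> M))
  (f : ('I_kA -> M) -> ('I_kC -> M)) :
  S (kB + kA) (fgraph_on DB p) -> S (kB + kC) (fgraph_on DB h) ->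
  (forall b, DB b -> DA (p b)) -> (forall a, DA a -> exists2 b, DB b & p b = a) ->
  (forall b, DB b -> f (p b) = h b) -> S (kA + kC) (fgraph_on DA f).
Proof.
move=> hp hh pD psurj fh.
pose X := [set w : 'I_(kA + kC + kB) -> M | fgraph_on DB p
               (tcat (w \o @rshift (kA + kC) kB) (w \o (lshift kB \o lshift kC)))] `&`
          [set w : 'I_(kA + kC + kB) -> M | fgraph_on DB h
               (tcat (w \o @rshift (kA + kC) kB) (w \o (lshift kB \o @rshift kA kC)))].
have hX : S (kA + kC + kB) X by apply: ds_setI; exact: ds_pullback2.
apply: ds_ext (ds_proj_tcat hX) _ => z; have [a [c ->]] := tcat_surj z.
rewrite fgraphP /X /=; split.
  move=> [b []]; rewrite tcat_rshift tcat3_ll tcat3_lr !fgraphP => -[Db ->] [_ ->].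
  by split; [exact: pD | rewrite fh].
move=> [Da ->]; have [b Db <-] := psurj a Da; exists b.
by rewrite tcat_rshift tcat3_ll tcat3_lr !fgraphP fh.
Qed.

End Definable.

Section GroupLaws.
Variables (M : Type) (S : dstructure M) (G : dagroup S).
Local Notation add := (@dg_add M S G).
Local Notation z0 := (dg_zero G).
Local Notation G_ := (dg_set G).

Lemma dg_addr0 x : G_ x -> add x z0 = x.
Proof. by move=> Gx; rewrite dg_addC ?dg_add0 //; exact: dg_zeroP. Qed.

Lemma dg_addKl x y z : G_ x -> G_ y -> G_ z -> add x y = add x z -> y = z.
Proof.
move=> Gx Gy Gz e; have [v Gv vx] := dg_addN Gx.
by rewrite -(dg_add0 Gy) -(dg_add0 Gz) -vx -!dg_addA // e.
Qed.

Lemma dg_addAC x y z : G_ x -> G_ y -> G_ z -> add (add x y) z = add (add x z) y.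
Proof. by move=> Gx Gy Gz; rewrite -!dg_addA // (dg_addC Gy Gz). Qed.

Lemma dg_addACA a b c d : G_ a -> G_ b -> G_ c -> G_ d ->
  add (add a b) (add c d) = add (add a c) (add b d).
Proof.
move=> Ga Gb Gc Gd; have Gab := dg_addP Ga Gb; have Gac := dg_addP Ga Gc.
by rewrite !dg_addA // (dg_addAC Ga Gb Gc).
Qed.

Lemma gmulP k x : G_ x -> G_ (gmul k x).
Proof. by move=> Gx; elim: k => [|k IH] /=; [exact: dg_zeroP | exact: dg_addP]. Qed.

Lemma gmulS k x : gmul k.+1 x = add x (gmul k x).
Proof. by []. Qed.

Lemma gmul0 k : gmul k z0 = z0.
Proof. by elim: k => [|k IH] //; rewrite gmulS IH dg_add0 //; exact: dg_zeroP. Qed.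

Lemma gmulD k x y : G_ x -> G_ y -> gmul k (add x y) = add (gmul k x) (gmul k y).
Proof.
move=> Gx Gy; elim: k => [|k IH]; first by rewrite /gmul /= dg_add0 //; exact: dg_zeroP.
by rewrite !gmulS IH dg_addACA //; exact: gmulP.
Qed.

Lemma ds_gmul k : (0 < k)%N -> S (dg_dim G + dg_dim G) (fgraph_on G_ (gmul k)).
Proof.
case: k => // k _; elim: k => [|k IH].
  apply: ds_ext (ds_fgraph_id (dg_def_set G)) _ => z; have [x [y ->]] := tcat_surj z.
  by rewrite !fgraphP /=; split=> -[Gx ->]; rewrite ?dg_addr0.
by apply: ds_fgraph_op IH (dg_def_add G) => x; exact: gmulP.
Qed.

End GroupLaws.

Section Homomorphisms.
Variables (M : Type) (S : dstructure M) (G H : dagroup S) (f : elt G -> elt H).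
Hypothesis hf : dhom f.

Lemma dhom0 : f (dg_zero G) = dg_zero H.
Proof.
case: hf => fP fD _; have G0 := dg_zeroP G.
have H0 := fP _ G0; apply: (dg_addKl H0) => //; first exact: dg_zeroP.
by rewrite -fD // dg_add0 // dg_addr0.
Qed.

Lemma dhom_gmul k x : dg_set G x -> f (gmul k x) = gmul k (f x).
Proof.
case: hf => fP fD _ Gx; elim: k => [|k IH]; first exact: dhom0.
by rewrite !gmulS fD ?IH //; exact: gmulP.
Qed.

End Homomorphisms.

Section Cosets.
Variables (M : Type) (S : dstructure M) (G : dagroup S) (n : nat).
Local Notation add := (@dg_add M S G).
Local Notation G_ := (dg_set G).

Definition coset (x : elt G) := [set y | exists2 h, mulgroup G n h & y = add x h].

Lemma coset_mem x : G_ x -> coset x x.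
Proof.
move=> Gx; exists (gmul n (dg_zero G)); first by exists (dg_zero G) => //; exact: dg_zeroP.
by rewrite gmul0 dg_addr0.
Qed.

Lemma coset_shift x d : G_ x -> G_ d -> coset (add x (gmul n d)) = coset x.
Proof.
move=> Gx Gd; have Gnd := gmulP n Gd; apply/seteqP; split=> y /= [h [e Ge <-] ->].
  exists (gmul n (add d e)); first by exists (add d e) => //; exact: dg_addP.
  by rewrite gmulD // dg_addA //; exact: gmulP.
have [v Gv vd] := dg_addN Gd; have Gnv := gmulP n Gv; have Gne := gmulP n Ge.
have Gxnd := dg_addP Gx Gnd.
exists (gmul n (add v e)); first by exists (add v e) => //; exact: dg_addP.
rewrite gmulD // !dg_addA // -(dg_addA Gx Gnd Gnv) -gmulD // (dg_addC Gd Gv) vd.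
by rewrite gmul0 dg_addr0.
Qed.

Definition coset_rep (K : set (elt G)) : elt G :=
  match pselect (exists x, G_ x /\ coset x = K) with
  | left h => proj1_sig (cid h)
  | right _ => dg_zero G
  end.

Lemma coset_repP x : G_ x -> G_ (coset_rep (coset x)) /\ coset (coset_rep (coset x)) = coset x.
Proof.
move=> Gx; rewrite /coset_rep; case: pselect => [h|[]]; first by case: (cid h).
by exists x.
Qed.

End Cosets.

Section ShortExactSequence.
Variables (M : Type) (S : dstructure M) (C B A : dagroup S).
Variables (i : elt C -> elt B) (p : elt B -> elt A).
Hypothesis ses : short_exact i p.
Local Notation addB := (@dg_add M S B).

Definition lift (a : elt A) : elt B :=
  match pselect (exists b, dg_set B b /\ p b = a) with
  | left h => proj1_sig (cid h)
  | right _ => dg_zero B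
  end.

Lemma liftP a : dg_set A a -> dg_set B (lift a) /\ p (lift a) = a.
Proof.
case: ses => _ _ _ psurj _ Aa; rewrite /lift; case: pselect => [h|[]]; first by case: (cid h).
by have [b Bb <-] := psurj a Aa; exists b.
Qed.

Lemma fiber_translate b b' : dg_set B b -> dg_set B b' -> p b = p b' ->
  exists2 c, dg_set C c & b = addB b' (i c).
Proof.
case: ses => _ hp _ _ pker Bb Bb' e; have [pP pD _] := hp.
have [v Bv vb'] := dg_addN Bb'; have Bvb := dg_addP Bv Bb.
have [c Cc ic] : exists2 c, dg_set C c & i c = addB v b.
  by apply/pker => //; rewrite pD // e -pD // vb' (dhom0 hp).
by exists c => //; rewrite ic dg_addA // (dg_addC Bb' Bv) vb' dg_add0.
Qed.

Lemma finite_index_mulgroup_ext n : finite_set (dg_set C) ->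
  finite_index (mulgroup A n) -> finite_index (mulgroup B n).
Proof.
move=> finC finA; case: ses => hi hp _ _ _; have [iP _ _] := hi; have [pP pD _] := hp.
pose g (K : set (elt A)) c := coset n (addB (lift (coset_rep n K)) (i c)).
apply: sub_finite_set (finite_image2 g finA finC) => _ [b Bb <-].
have [Aa0 ca0] := coset_repP n (pP _ Bb); set a0 := coset_rep n _ in Aa0 ca0.
have [_ [a Aa <-] pb] : coset n a0 (p b) by rewrite ca0; apply: coset_mem; exact: pP.
have [Bl0 pl0] := liftP Aa0; have [Bl pl] := liftP Aa.
have Bn := gmulP n Bl; have Bb1 := dg_addP Bl0 Bn.
have [c Cc ->] : exists2 c, dg_set C c & b = addB (addB (lift a0) (gmul n (lift a))) (i c).
  by apply: fiber_translate => //; rewrite pD // (dhom_gmul hp) // pl0 pl.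
exists (coset n (p b)); first by exists (p b) => //; exact: pP.
exists c => //; rewrite /g -/a0 dg_addAC //; last exact: iP.
by rewrite -[RHS]/(coset n _) coset_shift //; apply: dg_addP => //; exact: iP.
Qed.

Variable n : nat.
Hypothesis n_kills_C : forall c, dg_set C c -> gmul n c = dg_zero C.

Definition mul_lift (a : elt A) : elt B := gmul n (lift a).

Lemma mul_lift_p b : dg_set B b -> mul_lift (p b) = gmul n b.
Proof.
case: ses => hi hp _ _ _ Bb; have [iP _ _] := hi; have [pP _ _] := hp.
have [Bl pl] := liftP (pP _ Bb).
have [c Cc eb] := fiber_translate Bb Bl (esym pl).
have Bic := iP _ Cc.
by rewrite [in RHS]eb gmulD // -(dhom_gmul hi) // n_kills_C // (dhom0 hi) dg_addr0 //; exact: gmulP.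
Qed.

Lemma mul_lift_dhom : (0 < n)%N -> dhom mul_lift.
Proof.
move=> n_gt0; case: ses => _ hp _ psurj _; have [pP pD pdef] := hp.
split.
- by move=> a Aa; apply: gmulP; case: (liftP Aa).
- move=> a a' Aa Aa'; have [Bl pl] := liftP Aa; have [Bl' pl'] := liftP Aa'.
  have -> : dg_add a a' = p (addB (lift a) (lift a')) by rewrite pD // pl pl'.
  by rewrite mul_lift_p ?gmulD //; exact: dg_addP.
- exact: ds_fgraph_factor pdef (ds_gmul B n_gt0) pP psurj mul_lift_p.
Qed.

Lemma mul_lift_kernel : [set a | dg_set A a /\ mul_lift a = dg_zero B] `<=` torsion A n.
Proof.
case: ses => _ hp _ _ _ a [Aa fa]; split=> //; have [Bl pl] := liftP Aa.
by rewrite -pl -(dhom_gmul hp) // -/(mul_lift a) fa (dhom0 hp).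
Qed.

Lemma mul_lift_image : [set mul_lift a | a in dg_set A] = mulgroup B n.
Proof.
case: ses => _ [pP _ _] _ _ _; apply/seteqP; split=> x /=.
  by move=> [a Aa <-]; exists (lift a) => //; case: (liftP Aa).
by move=> [b Bb <-]; exists (p b); [exact: pP | exact: mul_lift_p].
Qed.

End ShortExactSequence.

Theorem lemma4p1 (M : Type) (S : dstructure M) (C B A : dagroup S)
  (i : elt C -> elt B) (p : elt B -> elt A) :
  short_exact i p ->
  finite_set (dg_set C) ->
  forall n : nat, is_exponent C n ->
  finite_index (mulgroup A n) ->
  finite_set (torsion A n) ->
  exists f : elt A -> elt B,
    [/\ dhom f,
        finite_set [set a | dg_set A a /\ f a = dg_zero B] &
        finite_index [set f a | a in dg_set A]].
Proof.
move=> ses finC n [n_gt0 nC _] finA finT.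
exists (mul_lift p n); split.
- exact: (mul_lift_dhom ses nC n_gt0).
- by apply: sub_finite_set finT; exact: (mul_lift_kernel ses).
- by rewrite (mul_lift_image ses nC); exact: (finite_index_mulgroup_ext ses finC finA).
Qed.
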